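(* Let $Y$, $\nu$, $\nu'$, $d(\cdot,x,n)$ be as in the context, and put $b_k=\log A_k$. Then: 1) For $\nu'$-almost every $x\in Y$, $$\liminf_{n\to\infty}d(\nu,x,n)=\liminf_{n\to\infty}\frac{\sum_{k=1}^n x_k}{\sum_{k=1}^n b_k},\qquad \limsup_{n\to\infty}d(\nu,x,n)=\limsup_{n\to\infty}\frac{\sum_{k=1}^n x_k}{\sum_{k=1}^n b_k},$$ where $x_k=-p_k'\log p_k-(1-p_k')\log(1-p_k)$. 2) For $\nu'$-almost every $x\in\operatorname{supp}(\nu')\subset Y$, $$\liminf_{n\to\infty}d(\nu',x,n)=\liminf_{n\to\infty}\frac{\sum_{k=1}^n y_k}{\sum_{k=1}^n b_k},\qquad \limsup_{n\to\infty}d(\nu',x,n)=\limsup_{n\to\infty}\frac{\sum_{k=1}^n y_k}{\sum_{k=1}^n b_k},$$ where $y_k=-p_k'\log p_k'-(1-p_k')\log(1-p_k')$ (with $0\log0=0$).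
   Context: Let $\mathcal A=\{0,1\}$. Let $(A_n)_{n\ge1}$ be real numbers with $A_n\ge2$. Define closed intervals $I_w$, $w\in\mathcal A^n$: $I_\emptyset=[0,1]$, and for $w\in\mathcal A^{n-1}$ with $I_w=[x_w,x_w+\ell]$, $I_{w0}=[x_w,x_w+\ell/A_n]$, $I_{w1}=[x_w+\ell-\ell/A_n,x_w+\ell]$. Let $Y=\bigcap_n\bigcup_{w\in\mathcal A^n}I_w$. Fix $0<a\le b<1$ and $(p_n)_{n\ge1}$ with $a\le p_n\le b$; let $\nu$ be the Borel probability measure with $\nu(I_\emptyset)=1$, $\nu(I_{w0})=p_n\nu(I_w)$, $\nu(I_{w1})=(1-p_n)\nu(I_w)$ for $w\in\mathcal A^{n-1}$ (so $\operatorname{supp}\nu=Y$). Given another sequence $(p_n')_{n\ge1}$ with $0\le p_n'\le1$, let $\nu'$ be the measure constructed in the same way with $p_n'$ in place of $p_n$. For $x\in Y$ and $n\ge1$, $I_n(x)$ denotes a level-$n$ interval $I_w$, $w\in\mathcal A^n$, containing $x$ (chosen consistently along the coding of $x$), and for a measure $\eta$, $d(\eta,x,n)=\frac{\log\eta(I_n(x))}{\log|I_n(x)|}$. *)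

From Stdlib Require Import Reals Lra.
Open Scope R_scope.

(* Codings: omega : nat -> bool, digit k (k >= 1) is omega k; true = symbol 1,
   false = symbol 0.  omega 0 is unused.  Sequences A, p, p' are indexed
   from 1 as in the paper (value at 0 unused). *)

Fixpoint ilen (A : nat -> R) (n : nat) : R :=
  match n with
  | O => 1
  | S m => ilen A m / A (S m)
  end.

(* Left endpoint x_w of I_w, w = omega 1 ... omega n. *)
Fixpoint ileft (A : nat -> R) (w : nat -> bool) (n : nat) : R :=
  match n with
  | O => 0
  | S m => ileft A w m + (if w (S m) then ilen A m - ilen A m / A (S m) else 0)
  end.

Definition iright (A : nat -> R) (w : nat -> bool) (n : nat) : R :=
  ileft A w n + ilen A n.

Definition diam (A : nat -> R) (w : nat -> bool) (n : nat) : R :=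
  iright A w n - ileft A w n.

(* eta(I_w) for the measure built from q: eta(I_{w0}) = q_n eta(I_w),
   eta(I_{w1}) = (1-q_n) eta(I_w). *)
Fixpoint cylmass (q : nat -> R) (w : nat -> bool) (n : nat) : R :=
  match n with
  | O => 1
  | S m => cylmass q w m * (if w (S m) then 1 - q (S m) else q (S m))
  end.

Definition dloc (q A : nat -> R) (w : nat -> bool) (n : nat) : R :=
  ln (cylmass q w n) / ln (diam A w n).

Definition in_cyl (w : nat -> bool) (n : nat) (om : nat -> bool) : Prop :=
  forall k, (1 <= k <= n)%nat -> om k = w k.

Definition null_set (q : nat -> R) (N : (nat -> bool) -> Prop) : Prop :=
  forall eps, 0 < eps ->
    exists (ws : nat -> (nat -> bool)) (ns : nat -> nat),
      (forall om, N om -> exists j, in_cyl (ws j) (ns j) om) /\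
      (forall J, sum_f_R0 (fun j => cylmass q (ws j) (ns j)) J < eps).

Definition ae (q : nat -> R) (P : (nat -> bool) -> Prop) : Prop :=
  null_set q (fun om => ~ P om).

Fixpoint psum (f : nat -> R) (n : nat) : R :=
  match n with
  | O => 0
  | S m => psum f m + f (S m)
  end.

Definition is_liminf (u : nat -> R) (l : R) : Prop :=
  forall eps, 0 < eps ->
    (exists N, forall n, (N <= n)%nat -> l - eps < u n) /\
    (forall N, exists n, (N <= n)%nat /\ u n < l + eps).

Definition is_limsup (u : nat -> R) (l : R) : Prop :=
  forall eps, 0 < eps ->
    (exists N, forall n, (N <= n)%nat -> u n < l + eps) /\
    (forall N, exists n, (N <= n)%nat /\ l - eps < u n).

Definition same_liminf (u v : nat -> R) : Prop :=
  exists l, is_liminf u l /\ is_liminf v l.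
Definition same_limsup (u v : nat -> R) : Prop :=
  exists l, is_limsup u l /\ is_limsup v l.

Definition xlnx (t : R) : R := if Req_EM_T t 0 then 0 else t * ln t.

Definition xseq (p p' : nat -> R) (k : nat) : R :=
  - p' k * ln (p k) - (1 - p' k) * ln (1 - p k).
Definition yseq (p' : nat -> R) (k : nat) : R :=
  - xlnx (p' k) - xlnx (1 - p' k).
Definition bseq (A : nat -> R) (k : nat) : R := ln (A k).

Definition ratio (f : nat -> R) (A : nat -> R) (n : nat) : R :=
  psum f n / psum (bseq A) n.

(* For a digit sequence x, -log eta(I_n(x)) is the sum over k <= n of the surprisal
   s_k(x_k) = -log of the weight eta gives to the k-th digit, and -log |I_n(x)| is
   b_1 + ... + b_n >= n log 2.  Under nu' the differences s_k(x_k) - E s_k are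
   independent, centred, with uniformly bounded fourth moments (for nu' itself this
   is t log^4 t <= 256); their partial sums D_n satisfy E D_n^4 = O(n^2), so Markov's
   inequality at threshold n^(7/2) and Borel-Cantelli give D_n = o(n) nu'-a.e.
   Hence d(eta, x, n) differs by o(1) from (E s_1 + ... + E s_n) / (b_1 + ... + b_n),
   which is x_k resp. y_k summed, and the two sequences share liminf and limsup. *)

From Stdlib Require Import Reals Lra Lia List Classical.
From Coquelicot Require Lim_seq.
Open Scope R_scope.

(** * Liminf and limsup *)

Lemma is_liminf_of_bounded (u : nat -> R) (c d : R) :
  (forall n, c <= u n <= d) -> exists l, is_liminf u l.
Proof.
  intros hu. destruct (Lim_seq.ex_LimInf_seq u) as [[l| |] hl]; simpl in hl.
  - exists l. intros eps heps. destruct (hl (mkposreal eps heps)) as [h1 h2]. split; assumption.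
  - destruct (hl d) as [N hN]. specialize (hN N (le_n _)). specialize (hu N). lra.
  - destruct (hl c O) as [n [_ hn]]. specialize (hu n). lra.
Qed.

Lemma is_limsup_of_bounded (u : nat -> R) (c d : R) :
  (forall n, c <= u n <= d) -> exists l, is_limsup u l.
Proof.
  intros hu. destruct (Lim_seq.ex_LimSup_seq u) as [[l| |] hl]; simpl in hl.
  - exists l. intros eps heps. destruct (hl (mkposreal eps heps)) as [h1 h2]. split; assumption.
  - destruct (hl d O) as [n [_ hn]]. specialize (hu n). lra.
  - destruct (hl c) as [N hN]. specialize (hN N (le_n _)). specialize (hu N). lra.
Qed.

Definition tends0 (u : nat -> R) : Prop :=
  forall eps, 0 < eps -> exists N, forall n, (N <= n)%nat -> Rabs (u n) < eps.

Lemma is_liminf_perturb (u v : nat -> R) (l : R) :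
  tends0 (fun n => u n - v n) -> is_liminf v l -> is_liminf u l.
Proof.
  intros huv hv eps heps.
  destruct (hv (eps / 2)) as [[N1 h1] h2]; [lra|].
  destruct (huv (eps / 2)) as [N2 h3]; [lra|]. split.
  - exists (N1 + N2)%nat. intros n hn.
    specialize (h1 n ltac:(lia)). specialize (h3 n ltac:(lia)). apply Rabs_def2 in h3. lra.
  - intros N. destruct (h2 (N + N2)%nat) as [n [hn hvn]]. exists n. split; [lia|].
    specialize (h3 n ltac:(lia)). apply Rabs_def2 in h3. lra.
Qed.

Lemma is_limsup_perturb (u v : nat -> R) (l : R) :
  tends0 (fun n => u n - v n) -> is_limsup v l -> is_limsup u l.
Proof.
  intros huv hv eps heps.
  destruct (hv (eps / 2)) as [[N1 h1] h2]; [lra|].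
  destruct (huv (eps / 2)) as [N2 h3]; [lra|]. split.
  - exists (N1 + N2)%nat. intros n hn.
    specialize (h1 n ltac:(lia)). specialize (h3 n ltac:(lia)). apply Rabs_def2 in h3. lra.
  - intros N. destruct (h2 (N + N2)%nat) as [n [hn hvn]]. exists n. split; [lia|].
    specialize (h3 n ltac:(lia)). apply Rabs_def2 in h3. lra.
Qed.

Lemma same_liminf_limsup_of_close (u v : nat -> R) (c d : R) :
  (forall n, c <= v n <= d) -> tends0 (fun n => u n - v n) ->
  same_liminf u v /\ same_limsup u v.
Proof.
  intros hv huv. split.
  - destruct (is_liminf_of_bounded v c d hv) as [l hl].
    exists l. split; [exact (is_liminf_perturb u v l huv hl) | exact hl].
  - destruct (is_limsup_of_bounded v c d hv) as [l hl].
    exists l. split; [exact (is_limsup_perturb u v l huv hl) | exact hl].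
Qed.

(** * Product measures on digit sequences *)

Definition is_prob_seq (q : nat -> R) : Prop := forall n, (1 <= n)%nat -> 0 <= q n <= 1.

Definition upd (w : nat -> bool) (n : nat) (b : bool) : nat -> bool :=
  fun k => if Nat.eqb k n then b else w k.

(* Expectation of a function of the digits 1..n when digit k is [false] with
   probability [q k]; the digits after n are frozen to [false]. *)
Fixpoint Ex (q : nat -> R) (n : nat) (F : (nat -> bool) -> R) : R :=
  match n with
  | O => F (fun _ => false)
  | S m => Ex q m (fun w => q (S m) * F (upd w (S m) false)
                            + (1 - q (S m)) * F (upd w (S m) true))
  end.

Lemma Ex_ext q n F G : (forall w, F w = G w) -> Ex q n F = Ex q n G.
Proof.
  revert F G; induction n as [|n IH]; intros F G hFG; simpl; [apply hFG|].
  apply IH. intros w. rewrite !hFG. reflexivity.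
Qed.

Lemma Ex_plus q n F G : Ex q n (fun w => F w + G w) = Ex q n F + Ex q n G.
Proof.
  revert F G; induction n as [|n IH]; intros F G; simpl; [reflexivity|].
  rewrite <- IH. apply Ex_ext. intros; ring.
Qed.

Lemma Ex_scal q n c F : Ex q n (fun w => c * F w) = c * Ex q n F.
Proof.
  revert F; induction n as [|n IH]; intros F; simpl; [reflexivity|].
  rewrite <- IH. apply Ex_ext. intros; ring.
Qed.

Lemma Ex_const q n c : Ex q n (fun _ => c) = c.
Proof.
  induction n as [|n IH]; simpl; [reflexivity|].
  transitivity (Ex q n (fun _ => c)); [|exact IH]. apply Ex_ext. intros; ring.
Qed.

Lemma Ex_le q n F G : is_prob_seq q -> (forall w, F w <= G w) -> Ex q n F <= Ex q n G.
Proof.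
  intros hq; revert F G; induction n as [|n IH]; intros F G hFG; simpl; [apply hFG|].
  apply IH. intros w. destruct (hq (S n)) as [h0 h1]; [lia|].
  pose proof (hFG (upd w (S n) false)); pose proof (hFG (upd w (S n) true)).
  apply Rplus_le_compat; apply Rmult_le_compat_l; lra.
Qed.

Definition depends_on {T : Type} (n : nat) (F : (nat -> bool) -> T) : Prop :=
  forall w w', in_cyl w n w' -> F w = F w'.

Lemma in_cyl_upd w n b : in_cyl w n (upd w (S n) b).
Proof. intros k hk. unfold upd. destruct (Nat.eqb_spec k (S n)); [lia | reflexivity]. Qed.

Lemma upd_eq w n b : upd w n b n = b.
Proof. unfold upd. rewrite Nat.eqb_refl. reflexivity. Qed.

Lemma in_cyl_S w n om : in_cyl w (S n) om -> in_cyl w n om.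
Proof. intros h k hk. apply h. lia. Qed.

Lemma cylmass_depends_on q n : depends_on n (fun w => cylmass q w n).
Proof.
  induction n as [|n IH]; intros w w' h; simpl; [reflexivity|].
  rewrite (IH w w' (in_cyl_S _ _ _ h)), (h (S n)); [reflexivity | lia].
Qed.

Lemma cylmass_nonneg q w n : is_prob_seq q -> 0 <= cylmass q w n.
Proof.
  intros hq; induction n as [|n IH]; simpl; [lra|].
  destruct (hq (S n)); [lia|]. apply Rmult_le_pos; [exact IH|]. destruct (w (S n)); lra.
Qed.

Fixpoint lmass (q : nat -> R) (n : nat) (L : list (nat -> bool)) : R :=
  match L with
  | nil => 0
  | w :: L' => cylmass q w n + lmass q n L'
  end.

Lemma lmass_app q n L1 L2 : lmass q n (L1 ++ L2) = lmass q n L1 + lmass q n L2.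
Proof. induction L1 as [|w L1 IH]; simpl; [ring | rewrite IH; ring]. Qed.

Lemma lmass_map_upd q n L b : lmass q (S n) (map (fun w => upd w (S n) b) L) =
  (if b then 1 - q (S n) else q (S n)) * lmass q n L.
Proof.
  induction L as [|w L IH]; simpl; [ring|]. rewrite IH, upd_eq.
  rewrite (cylmass_depends_on q n (upd w (S n) b) w); [ring|].
  intros k hk. symmetry. apply in_cyl_upd. exact hk.
Qed.

Definition indicator (b : bool) : R := if b then 1 else 0.

Lemma cylinder_cover q n (P : (nat -> bool) -> bool) : depends_on n P ->
  { L | (forall om, P om = true -> exists w, In w L /\ in_cyl w n om) /\
        lmass q n L = Ex q n (fun w => indicator (P w)) }.
Proof.
  revert P; induction n as [|n IH]; intros P hP.
  - destruct (P (fun _ => false)) eqn:h0.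
    + exists ((fun _ => false) :: nil). split.
      * intros om _. exists (fun _ => false). split; [left; reflexivity|]. intros k hk; lia.
      * simpl. unfold indicator. rewrite h0. ring.
    + exists nil. split.
      * intros om hom. rewrite (hP om (fun _ => false)) in hom; [congruence|]. intros k hk; lia.
      * simpl. unfold indicator. rewrite h0. ring.
  - assert (hPb : forall b, depends_on n (fun w => P (upd w (S n) b))).
    { intros b w w' h. apply hP. intros k hk. unfold upd.
      destruct (Nat.eqb_spec k (S n)); [reflexivity|]. apply h; lia. }
    destruct (IH _ (hPb false)) as [L0 [hc0 hm0]].
    destruct (IH _ (hPb true)) as [L1 [hc1 hm1]].
    exists (map (fun w => upd w (S n) false) L0 ++ map (fun w => upd w (S n) true) L1).
    split.
    + intros om hom.
      assert (hcov : forall b L, om (S n) = b ->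
                (forall om', P (upd om' (S n) b) = true -> exists w, In w L /\ in_cyl w n om') ->
                exists w, In w (map (fun w => upd w (S n) b) L) /\ in_cyl w (S n) om).
      { intros b L hb hc. destruct (hc om) as [w [hw hcw]].
        - rewrite (hP (upd om (S n) b) om); [exact hom|].
          intros k hk. unfold upd. destruct (Nat.eqb_spec k (S n)); congruence.
        - exists (upd w (S n) b). split; [exact (in_map (fun w => upd w (S n) b) L w hw)|].
          intros k hk. unfold upd. destruct (Nat.eqb_spec k (S n)); [congruence|].
          apply hcw; lia. }
      pose proof (hcov (om (S n))) as hcov'. destruct (om (S n)).
      * destruct (hcov' L1 eq_refl hc1) as [w [hw hcw]].
        exists w. split; [apply in_or_app; right|]; assumption.
      * destruct (hcov' L0 eq_refl hc0) as [w [hw hcw]].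
        exists w. split; [apply in_or_app; left|]; assumption.
    + rewrite lmass_app, !lmass_map_upd, hm0, hm1. simpl.
      rewrite <- !Ex_scal, <- Ex_plus. apply Ex_ext. intros; ring.
Qed.

(** * Countable covers by cylinders *)

Definition light_word (q : nat -> R) : nat -> bool :=
  fun k => if Rle_dec (q k) (1 / 2) then false else true.

Lemma cylmass_light_word q l : is_prob_seq q -> cylmass q (light_word q) l <= (1 / 2) ^ l.
Proof.
  intros hq; induction l as [|l IH]; simpl; [lra|].
  destruct (hq (S l)); [lia|]. pose proof (cylmass_nonneg q (light_word q) l hq).
  rewrite (Rmult_comm (1 / 2)). apply Rmult_le_compat; [lra | | lra |].
  - unfold light_word. destruct (Rle_dec (q (S l)) (1 / 2)); lra.
  - unfold light_word. destruct (Rle_dec (q (S l)) (1 / 2)); lra.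
Qed.

Definition pmass (q : nat -> R) (c : (nat -> bool) * nat) : R := cylmass q (fst c) (snd c).

Fixpoint cmass (q : nat -> R) (C : list ((nat -> bool) * nat)) : R :=
  match C with
  | nil => 0
  | c :: C' => pmass q c + cmass q C'
  end.

Lemma cmass_app q C1 C2 : cmass q (C1 ++ C2) = cmass q C1 + cmass q C2.
Proof. induction C1 as [|c C1 IH]; simpl; [ring | rewrite IH; ring]. Qed.

Lemma cmass_map_pair q n L : cmass q (map (fun w => (w, n)) L) = lmass q n L.
Proof. induction L as [|w L IH]; simpl; [reflexivity | rewrite IH; reflexivity]. Qed.

Lemma cmass_nonneg q C : is_prob_seq q -> 0 <= cmass q C.
Proof.
  intros hq; induction C as [|c C IH]; simpl; [lra|].
  pose proof (cylmass_nonneg q (fst c) (snd c) hq). unfold pmass. lra.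
Qed.

Lemma sum_pmass_nth_le q C d J : is_prob_seq q -> (J < length C)%nat ->
  sum_f_R0 (fun j => pmass q (nth j C d)) J <= cmass q C.
Proof.
  intros hq. revert J; induction C as [|c C IH]; intros J hJ; simpl in hJ; [lia|].
  simpl cmass. destruct J as [|J].
  - simpl. pose proof (cmass_nonneg q C hq). lra.
  - rewrite decomp_sum by lia. simpl. specialize (IH J ltac:(lia)). lra.
Qed.

Section Flatten.

Variables (q : nat -> R) (L : nat -> list (nat -> bool)) (K : nat).

(* Block n is padded with a cylinder of mass at most 2^-(n+K); blocks are thus
   nonempty, so position j of the concatenation lies in its first j+1 blocks. *)
Definition block (n : nat) : list ((nat -> bool) * nat) :=
  map (fun w => (w, n)) (L n) ++ (light_word q, (n + K)%nat) :: nil.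

Definition flat (M : nat) : list ((nat -> bool) * nat) := flat_map block (seq 0 M).

Lemma flat_S M : flat (S M) = flat M ++ block M.
Proof. unfold flat. rewrite seq_S, flat_map_app. simpl. rewrite app_nil_r. reflexivity. Qed.

Lemma flat_length M : (M <= length (flat M))%nat.
Proof.
  induction M as [|M IH]; [simpl; lia|].
  rewrite flat_S, length_app. unfold block. rewrite length_app. simpl. lia.
Qed.

Lemma flat_prefix M M' : (M <= M')%nat -> exists r, flat M' = flat M ++ r.
Proof.
  induction 1 as [|M' _ [r hr]]; [exists nil; rewrite app_nil_r; reflexivity|].
  exists (r ++ block M'). rewrite flat_S, hr, app_assoc. reflexivity.
Qed.

Lemma nth_flat_stable M M' j d : (M <= M')%nat -> (j < length (flat M))%nat ->
  nth j (flat M') d = nth j (flat M) d.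
Proof. intros hM hj. destruct (flat_prefix M M' hM) as [r ->]. apply app_nth1, hj. Qed.

Lemma nth_flat_diag n j d : (j < length (flat (S n)))%nat ->
  nth j (flat (S j)) d = nth j (flat (S n)) d.
Proof.
  intros hj. destruct (Nat.le_ge_cases j n) as [h | h].
  - symmetry. apply nth_flat_stable; [lia|]. pose proof (flat_length (S j)). lia.
  - apply nth_flat_stable; [lia | exact hj].
Qed.

Lemma In_flat n w : In w (L n) -> In (w, n) (flat (S n)).
Proof.
  intros hw. rewrite flat_S. apply in_or_app. right. unfold block. apply in_or_app. left.
  exact (in_map (fun w => (w, n)) _ _ hw).
Qed.

Lemma cmass_flat M : cmass q (flat (S M)) =
  sum_f_R0 (fun n => lmass q n (L n) + cylmass q (light_word q) (n + K)) M.
Proof.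
  induction M as [|M IH]; rewrite flat_S, cmass_app; unfold block;
    rewrite cmass_app, cmass_map_pair; simpl; unfold pmass; simpl.
  - ring.
  - rewrite IH. ring.
Qed.

End Flatten.

Lemma sum_half_pow_le J : sum_f_R0 (fun n => (1 / 2) ^ n) J <= 2.
Proof.
  rewrite tech3 by lra. assert (0 <= (1 / 2) ^ S J) by (apply pow_le; lra).
  unfold Rdiv. replace (/ (1 - 1 * / 2)) with 2 by field. lra.
Qed.

Lemma null_set_of_covers q (N : (nat -> bool) -> Prop) : is_prob_seq q ->
  (forall eps, 0 < eps -> exists L : nat -> list (nat -> bool),
     (forall om, N om -> exists n w, In w (L n) /\ in_cyl w n om) /\
     (forall M, sum_f_R0 (fun n => lmass q n (L n)) M <= eps)) ->
  null_set q N.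
Proof.
  intros hq hL eps heps.
  destruct (hL (eps / 2)) as [L [hcov hsum]]; [lra|].
  destruct (pow_lt_1_zero (1 / 2) ltac:(rewrite Rabs_pos_eq; lra) (eps / 8)) as [K hK]; [lra|].
  specialize (hK K (le_n _)). rewrite Rabs_pos_eq in hK by (apply pow_le; lra).
  set (d := (light_word q, O)).
  set (c := fun j => nth j (flat q L K (S j)) d).
  exists (fun j => fst (c j)), (fun j => snd (c j)). split.
  - intros om hom. destruct (hcov om hom) as [n [w [hw hcw]]].
    destruct (In_nth _ _ d (In_flat q L K n w hw)) as [j [hj hnth]].
    exists j. unfold c. rewrite (nth_flat_diag q L K n j d hj), hnth. exact hcw.
  - intros J. apply Rle_lt_trans with (cmass q (flat q L K (S J))).
    + rewrite (sum_eq _ (fun j => pmass q (nth j (flat q L K (S J)) d))).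
      * apply sum_pmass_nth_le; [exact hq|]. pose proof (flat_length q L K (S J)). lia.
      * intros j hj. unfold c, pmass. rewrite (nth_flat_stable q L K (S j) (S J)); [reflexivity | lia|].
        pose proof (flat_length q L K (S j)). lia.
    + rewrite cmass_flat, sum_plus.
      assert (hpad : sum_f_R0 (fun n => cylmass q (light_word q) (n + K)) J <= 2 * (1 / 2) ^ K).
      { apply Rle_trans with (sum_f_R0 (fun n => (1 / 2) ^ n * (1 / 2) ^ K) J).
        - apply sum_Rle. intros n _. rewrite <- pow_add. apply cylmass_light_word, hq.
        - rewrite <- scal_sum, Rmult_comm. apply Rmult_le_compat_r; [apply pow_le; lra|].
          apply sum_half_pow_le. }
      specialize (hsum J). lra.
Qed.

(** * Moments of centred walks *)

Definition dev (Y : nat -> bool -> R) (n : nat) (w : nat -> bool) : R :=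
  psum (fun k => Y k (w k)) n.

Definition centered (q : nat -> R) (Y : nat -> bool -> R) : Prop :=
  forall k, (1 <= k)%nat -> q k * Y k false + (1 - q k) * Y k true = 0.

Definition fourth_moment_le (q : nat -> R) (Y : nat -> bool -> R) (M : R) : Prop :=
  forall k, (1 <= k)%nat -> q k * Y k false ^ 4 + (1 - q k) * Y k true ^ 4 <= M.

Lemma dev_depends_on Y n : depends_on n (dev Y n).
Proof.
  induction n as [|n IH]; intros w w' h; unfold dev; simpl; [reflexivity|].
  fold (dev Y n w) (dev Y n w'). rewrite (IH w w' (in_cyl_S _ _ _ h)), (h (S n)); [reflexivity | lia].
Qed.

Lemma dev_upd Y n w b : dev Y (S n) (upd w (S n) b) = dev Y n w + Y (S n) b.
Proof.
  unfold dev at 1. simpl. fold (dev Y n (upd w (S n) b)). rewrite upd_eq.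
  rewrite (dev_depends_on Y n (upd w (S n) b) w); [reflexivity|].
  intros k hk. symmetry. apply in_cyl_upd, hk.
Qed.

Lemma Ex_dev_S q Y n (G : R -> R) :
  Ex q (S n) (fun w => G (dev Y (S n) w)) =
  Ex q n (fun w => q (S n) * G (dev Y n w + Y (S n) false)
                   + (1 - q (S n)) * G (dev Y n w + Y (S n) true)).
Proof. simpl. apply Ex_ext. intros w. rewrite !dev_upd. reflexivity. Qed.

Lemma Ex_dev q Y n : centered q Y -> Ex q n (dev Y n) = 0.
Proof.
  intros hc; induction n as [|n IH]; [reflexivity|].
  change (Ex q (S n) (fun w => (fun x => x) (dev Y (S n) w)) = 0). rewrite Ex_dev_S.
  rewrite (Ex_ext _ _ _ (fun w => dev Y n w + (q (S n) * Y (S n) false + (1 - q (S n)) * Y (S n) true)))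
    by (intros; ring).
  rewrite Ex_plus, Ex_const, IH, hc by lia. ring.
Qed.

Lemma sq_le_1_plus_pow4 y : y ^ 2 <= 1 + y ^ 4.
Proof. nra. Qed.

Lemma Ex_dev_sq_le q Y n M : is_prob_seq q -> centered q Y -> fourth_moment_le q Y M ->
  Ex q n (fun w => dev Y n w ^ 2) <= INR n * (1 + M).
Proof.
  intros hq hc hm; induction n as [|n IH]; [simpl; unfold dev; simpl; lra|].
  rewrite (Ex_dev_S q Y n (fun x => x ^ 2)).
  set (e1 := q (S n) * Y (S n) false + (1 - q (S n)) * Y (S n) true).
  set (e2 := q (S n) * Y (S n) false ^ 2 + (1 - q (S n)) * Y (S n) true ^ 2).
  rewrite (Ex_ext _ _ _ (fun w => (dev Y n w ^ 2 + (2 * e1) * dev Y n w) + e2)) by (intros; unfold e1, e2; ring).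
  rewrite !Ex_plus, Ex_scal, Ex_const, Ex_dev by exact hc.
  assert (he2 : e2 <= 1 + M).
  { specialize (hm (S n) ltac:(lia)). destruct (hq (S n)); [lia|].
    pose proof (sq_le_1_plus_pow4 (Y (S n) false)). pose proof (sq_le_1_plus_pow4 (Y (S n) true)).
    unfold e2. nra. }
  rewrite S_INR. lra.
Qed.

Lemma Ex_dev_pow4_le q Y n M : is_prob_seq q -> centered q Y -> fourth_moment_le q Y M ->
  0 <= M -> Ex q n (fun w => dev Y n w ^ 4) <= (3 * (1 + M) ^ 2 + M) * INR n ^ 2.
Proof.
  intros hq hc hm hM; induction n as [|n IH]; [simpl; unfold dev; simpl; lra|].
  rewrite (Ex_dev_S q Y n (fun x => x ^ 4)).
  set (y0 := Y (S n) false). set (y1 := Y (S n) true). set (qk := q (S n)).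
  set (e1 := qk * y0 + (1 - qk) * y1).
  set (e2 := qk * y0 ^ 2 + (1 - qk) * y1 ^ 2).
  set (e3 := qk * y0 ^ 3 + (1 - qk) * y1 ^ 3).
  set (e4 := qk * y0 ^ 4 + (1 - qk) * y1 ^ 4).
  rewrite (Ex_ext _ _ _ (fun w => ((dev Y n w ^ 4 + (4 * e1) * dev Y n w ^ 3)
                                    + (6 * e2) * dev Y n w ^ 2) + ((4 * e3) * dev Y n w + e4)))
    by (intros; unfold e1, e2, e3, e4; ring).
  rewrite !Ex_plus, !Ex_scal, Ex_const, Ex_dev by exact hc.
  assert (he1 : e1 = 0) by (apply hc; lia).
  assert (he2 : 0 <= e2 <= 1 + M).
  { specialize (hm (S n) ltac:(lia)). destruct (hq (S n)) as [hq0 hq1]; [lia|].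
    fold y0 y1 qk in hm, hq0, hq1.
    pose proof (sq_le_1_plus_pow4 y0). pose proof (sq_le_1_plus_pow4 y1).
    unfold e2. split; nra. }
  assert (he4 : e4 <= M) by (apply hm; lia).
  assert (hsq : e2 * Ex q n (fun w => dev Y n w ^ 2) <= (1 + M) * (INR n * (1 + M))).
  { apply Rmult_le_compat; try lra; [|exact (Ex_dev_sq_le q Y n M hq hc hm)].
    rewrite <- (Ex_const q n 0). apply Ex_le; [exact hq|]. intros; nra. }
  pose proof (pos_INR n). rewrite he1, S_INR. nra.
Qed.

(** * A strong law of large numbers *)

Lemma div_nonneg x y : 0 <= x -> 0 < y -> 0 <= x / y.
Proof. intros hx hy. apply Rmult_le_pos; [exact hx | left; apply Rinv_0_lt_compat, hy]. Qed.

Lemma inv_mul_sqrt_le_telescope x : 1 < x ->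
  1 / (x * sqrt x) <= 2 * (1 / sqrt (x - 1) - 1 / sqrt x).
Proof.
  intros hx.
  assert (ha : 0 < sqrt (x - 1)) by (apply sqrt_lt_R0; lra).
  assert (hb : 0 < sqrt x) by (apply sqrt_lt_R0; lra).
  assert (ha2 : sqrt (x - 1) * sqrt (x - 1) = x - 1) by (apply sqrt_sqrt; lra).
  assert (hb2 : sqrt x * sqrt x = x) by (apply sqrt_sqrt; lra).
  assert (hab : sqrt (x - 1) <= sqrt x) by (apply sqrt_le_1_alt; lra).
  set (a := sqrt (x - 1)) in *. set (b := sqrt x) in *.
  assert (hdiff : (b - a) * (a + b) = 1) by nra.
  replace (1 / a - 1 / b) with ((b - a) * (a + b) / (a * b * (a + b))) by (field; lra).
  rewrite hdiff.
  rewrite <- hb2.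
  apply Rmult_le_reg_r with (b * b * b * (a * b * (a + b))); [apply Rmult_lt_0_compat; nra|].
  field_simplify; nra.
Qed.

Lemma sum_le_telescope (u f : nat -> R) (N0 M : nat) :
  (forall n, (n < N0)%nat -> u n = 0) ->
  (forall n, (N0 <= n)%nat -> u n <= f n - f (S n)) ->
  (forall n, (N0 <= n)%nat -> 0 <= f n) ->
  sum_f_R0 u M <= f N0.
Proof.
  intros hlow hstep hpos.
  assert (hpart : forall m, sum_f_R0 u m <= if Nat.ltb m N0 then 0 else f N0 - f (S m)).
  { induction m as [|m IH]; simpl.
    - destruct (Nat.ltb_spec 0 N0) as [h | h].
      + rewrite hlow by exact h. lra.
      + replace N0 with O by lia. apply hstep. lia.
    - destruct (Nat.ltb_spec m N0) as [h | h]; destruct (Nat.ltb_spec (S m) N0) as [h' | h'].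
      + rewrite hlow by exact h'. lra.
      + replace N0 with (S m) in * by lia. pose proof (hstep (S m) (le_n _)). lra.
      + lia.
      + pose proof (hstep (S m) ltac:(lia)). lra. }
  specialize (hpart M). destruct (Nat.ltb_spec M N0) as [h | h].
  - pose proof (hpos N0 (le_n _)). lra.
  - pose proof (hpos (S M) ltac:(lia)). lra.
Qed.

Definition Rltb (x y : R) : bool := if Rlt_dec x y then true else false.

Lemma Ex_markov q n T F : is_prob_seq q -> 0 < T -> (forall w, 0 <= F w) ->
  Ex q n (fun w => indicator (Rltb T (F w))) <= Ex q n F / T.
Proof.
  intros hq hT hF. unfold Rdiv. rewrite Rmult_comm, <- Ex_scal.
  apply Ex_le; [exact hq|]. intros w. unfold indicator, Rltb.
  destruct (Rlt_dec T (F w)) as [h | h].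
  - apply (Rmult_le_reg_l T); [exact hT|]. field_simplify; lra.
  - apply Rmult_le_pos; [left; apply Rinv_0_lt_compat, hT | apply hF].
Qed.

Lemma pow4_gt_of_linear_dev d x D : 0 < d -> 1 / d ^ 8 < x -> d * x < Rabs D ->
  x ^ 3 * sqrt x < D ^ 4.
Proof.
  intros hd hx hD.
  assert (hd8 : 0 < d ^ 8) by (apply pow_lt, hd).
  assert (hx0 : 0 < x) by (apply Rlt_trans with (1 / d ^ 8); [apply Rdiv_lt_0_compat; lra | exact hx]).
  assert (hs : 0 < sqrt x) by (apply sqrt_lt_R0, hx0).
  assert (hs2 : sqrt x * sqrt x = x) by (apply sqrt_sqrt; lra).
  assert (h1 : 1 < d ^ 8 * x).
  { apply (Rmult_lt_compat_l (d ^ 8)) in hx; [|exact hd8].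
    replace (d ^ 8 * (1 / d ^ 8)) with 1 in hx by (field; lra). exact hx. }
  assert (h2 : 1 < d ^ 4 * sqrt x).
  { assert (0 < d ^ 4 * sqrt x) by (apply Rmult_lt_0_compat; [apply pow_lt|]; assumption).
    assert (e : (d ^ 4 * sqrt x) * (d ^ 4 * sqrt x) = d ^ 8 * (sqrt x * sqrt x)) by ring.
    rewrite hs2 in e. nra. }
  assert (h3 : x ^ 3 * sqrt x < (d * x) ^ 4).
  { assert (e : (d ^ 4 * sqrt x) * (x ^ 3 * sqrt x) = d ^ 4 * x ^ 3 * (sqrt x * sqrt x)) by ring.
    rewrite hs2 in e. replace ((d * x) ^ 4) with ((d ^ 4 * sqrt x) * (x ^ 3 * sqrt x)) by (rewrite e; ring).
    assert (0 < x ^ 3 * sqrt x) by (apply Rmult_lt_0_compat; [apply pow_lt|]; assumption).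
    nra. }
  assert (h4 : (d * x) ^ 4 <= D ^ 4).
  { assert (hD4 : Rabs D ^ 4 = D ^ 4).
    { rewrite RPow_abs. apply Rabs_pos_eq.
      replace (D ^ 4) with ((D ^ 2) ^ 2) by ring. apply pow2_ge_0. }
    rewrite <- hD4. apply pow_incr. assert (0 < d * x) by (apply Rmult_lt_0_compat; assumption). lra. }
  lra.
Qed.

Lemma Ex_large_dev_le q Y M n :
  is_prob_seq q -> centered q Y -> fourth_moment_le q Y M -> 0 <= M -> (2 <= n)%nat ->
  Ex q n (fun w => indicator (Rltb (INR n ^ 3 * sqrt (INR n)) (dev Y n w ^ 4)))
  <= 2 * (3 * (1 + M) ^ 2 + M) * (1 / sqrt (INR n - 1) - 1 / sqrt (INR (S n) - 1)).
Proof.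
  intros hq hc hm hM hn.
  set (C := 3 * (1 + M) ^ 2 + M).
  assert (hC : 0 <= C) by (unfold C; nra).
  rewrite S_INR. replace (INR n + 1 - 1) with (INR n) by ring.
  assert (hx : 2 <= INR n) by (apply le_INR in hn; simpl in hn; lra).
  set (x := INR n) in *.
  assert (hs : 0 < sqrt x) by (apply sqrt_lt_R0; lra).
  assert (hT : 0 < x ^ 3 * sqrt x) by (apply Rmult_lt_0_compat; [apply pow_lt; lra | exact hs]).
  eapply Rle_trans.
  { apply Ex_markov; [exact hq | exact hT|]. intros w.
    replace (dev Y n w ^ 4) with ((dev Y n w ^ 2) ^ 2) by ring. apply pow2_ge_0. }
  apply Rle_trans with (C * (1 / (x * sqrt x))).
  - apply Rle_trans with (C * x ^ 2 / (x ^ 3 * sqrt x)).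
    + apply Rmult_le_compat_r; [left; apply Rinv_0_lt_compat, hT|].
      apply Ex_dev_pow4_le; assumption.
    + right. field. lra.
  - rewrite (Rmult_comm 2 C), Rmult_assoc. apply Rmult_le_compat_l; [exact hC|].
    apply inv_mul_sqrt_le_telescope. lra.
Qed.

Definition little_o_n (u : nat -> R) : Prop :=
  forall d, 0 < d -> exists N, forall n, (N <= n)%nat -> Rabs (u n) <= d * INR n.

Lemma not_little_o_n_large u : ~ little_o_n u ->
  forall N, exists n, (N <= n)%nat /\ INR n ^ 3 * sqrt (INR n) < u n ^ 4.
Proof.
  intros hu N. apply not_all_ex_not in hu. destruct hu as [d hd].
  apply imply_to_and in hd. destruct hd as [hd hnot].
  destruct (INR_unbounded (1 / d ^ 8)) as [N1 hN1].
  assert (hex : exists n, (N + N1 <= n)%nat /\ d * INR n < Rabs (u n)).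
  { apply NNPP. intros hno. apply hnot. exists (N + N1)%nat. intros n hn.
    apply Rnot_lt_le. intros hlt. apply hno. exists n. split; assumption. }
  destruct hex as [n [hn hlt]]. exists n. split; [lia|].
  apply (pow4_gt_of_linear_dev d); [exact hd | | exact hlt].
  apply Rlt_le_trans with (INR N1); [exact hN1 | apply le_INR; lia].
Qed.

Lemma exists_inv_sqrt_le c eps : 0 < c -> 0 < eps ->
  exists N0, (2 <= N0)%nat /\ c * (1 / sqrt (INR N0 - 1)) <= eps.
Proof.
  intros hc heps. destruct (INR_unbounded ((c / eps) ^ 2 + 2)) as [N0 hN0].
  pose proof (pow2_ge_0 (c / eps)).
  assert (hr : 0 < c / eps) by (apply Rdiv_lt_0_compat; lra).
  exists N0. split.
  - destruct (Nat.le_gt_cases 2 N0) as [h | h]; [exact h|].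
    assert (INR N0 <= 1) by (apply (le_INR N0 1); lia). lra.
  - assert (hs : c / eps < sqrt (INR N0 - 1)).
    { rewrite <- (sqrt_pow2 (c / eps)) by lra. apply sqrt_lt_1; lra. }
    assert (hs0 : 0 < sqrt (INR N0 - 1)) by lra.
    apply (Rmult_lt_compat_l eps) in hs; [|exact heps].
    replace (eps * (c / eps)) with c in hs by (field; lra).
    apply (Rmult_le_reg_r (sqrt (INR N0 - 1))); [exact hs0|].
    replace (c * (1 / sqrt (INR N0 - 1)) * sqrt (INR N0 - 1)) with c by (field; lra).
    lra.
Qed.

Lemma ae_little_o_dev q Y M :
  is_prob_seq q -> centered q Y -> fourth_moment_le q Y M -> 0 <= M ->
  ae q (fun om => little_o_n (fun n => dev Y n om)).
Proof.
  intros hq hc hm hM. apply null_set_of_covers; [exact hq|]. intros eps heps.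
  set (C := 3 * (1 + M) ^ 2 + M).
  assert (hC : 0 < C) by (unfold C; nra).
  destruct (exists_inv_sqrt_le (2 * C) eps ltac:(lra) heps) as [N0 [hN0_2 htail]].
  set (bad := fun n w => andb (N0 <=? n)%nat (Rltb (INR n ^ 3 * sqrt (INR n)) (dev Y n w ^ 4))).
  assert (hdep : forall n, depends_on n (bad n)).
  { intros n w w' h. unfold bad. rewrite (dev_depends_on Y n w w' h). reflexivity. }
  exists (fun n => proj1_sig (cylinder_cover q n (bad n) (hdep n))). split.
  - intros om hom. destruct (not_little_o_n_large _ hom N0) as [n [hn hlarge]].
    destruct (proj2_sig (cylinder_cover q n (bad n) (hdep n))) as [hcov _].
    exists n. apply hcov. unfold bad, Rltb.
    destruct (Nat.leb_spec N0 n); [|lia]. destruct (Rlt_dec _ _); [reflexivity | contradiction].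
  - intros M'. eapply Rle_trans; [|exact htail].
    apply (sum_le_telescope _ (fun n => 2 * C * (1 / sqrt (INR n - 1)))).
    + intros n hn. destruct (proj2_sig (cylinder_cover q n (bad n) (hdep n))) as [_ ->].
      unfold bad. destruct (Nat.leb_spec N0 n); [lia|]. exact (Ex_const q n 0).
    + intros n hn. destruct (proj2_sig (cylinder_cover q n (bad n) (hdep n))) as [_ ->].
      unfold bad. destruct (Nat.leb_spec N0 n); [|lia].
      rewrite <- Rmult_minus_distr_l. apply Ex_large_dev_le; auto. lia.
    + intros n hn. apply Rmult_le_pos; [lra|].
      assert (h2n : INR 2 <= INR n) by (apply le_INR; lia). simpl in h2n.
      apply div_nonneg; [lra|]. apply sqrt_lt_R0. lra.
Qed.

(** * Local dimensions *)

Definition surprisal (r : nat -> R) (k : nat) (b : bool) : R :=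
  - ln (if b then 1 - r k else r k).

Lemma ln_cylmass r om n : (forall n, 0 < cylmass r om n) ->
  ln (cylmass r om n) = - psum (fun k => surprisal r k (om k)) n.
Proof.
  intros hpos; induction n as [|n IH]; simpl; [rewrite ln_1; ring|].
  assert (hf : 0 < (if om (S n) then 1 - r (S n) else r (S n))).
  { pose proof (hpos (S n)) as h1. simpl in h1.
    apply (Rmult_lt_reg_l (cylmass r om n)); [apply hpos|]. rewrite Rmult_0_r. exact h1. }
  rewrite ln_mult, IH by auto. unfold surprisal. ring.
Qed.

Lemma ilen_pos A n : (forall n, (1 <= n)%nat -> 2 <= A n) -> 0 < ilen A n.
Proof.
  intros hA; induction n as [|n IH]; simpl; [lra|].
  apply Rdiv_lt_0_compat; [exact IH|]. specialize (hA (S n) ltac:(lia)). lra.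
Qed.

Lemma ln_diam A om n : (forall n, (1 <= n)%nat -> 2 <= A n) ->
  ln (diam A om n) = - psum (bseq A) n.
Proof.
  intros hA. unfold diam, iright.
  replace (ileft A om n + ilen A n - ileft A om n) with (ilen A n) by ring.
  induction n as [|n IH]; simpl; [rewrite ln_1; ring|].
  assert (0 < A (S n)) by (specialize (hA (S n) ltac:(lia)); lra).
  unfold Rdiv. rewrite ln_mult, ln_Rinv, IH by (auto using ilen_pos, Rinv_0_lt_compat).
  unfold bseq. ring.
Qed.

Lemma psum_bseq_ge A n : (forall n, (1 <= n)%nat -> 2 <= A n) ->
  INR n * ln 2 <= psum (bseq A) n.
Proof.
  intros hA; induction n as [|n IH]; simpl psum; [simpl; lra|].
  assert (ln 2 <= bseq A (S n)).
  { unfold bseq. specialize (hA (S n) ltac:(lia)). destruct (Req_dec 2 (A (S n))) as [<- | h]; [lra|].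
    left. apply ln_increasing; lra. }
  rewrite S_INR. lra.
Qed.

Lemma ln2_pos : 0 < ln 2.
Proof. rewrite <- ln_1. apply ln_increasing; lra. Qed.

Lemma ratio_bounds g A K : (forall n, (1 <= n)%nat -> 2 <= A n) ->
  (forall k, (1 <= k)%nat -> 0 <= g k <= K) -> forall n, 0 <= ratio g A n <= K / ln 2.
Proof.
  intros hA hg n. pose proof ln2_pos. unfold ratio.
  assert (hK : 0 <= K) by (destruct (hg 1%nat); [lia | lra]).
  destruct n as [|n]; [simpl; rewrite Rdiv_0_l; split; [lra | apply div_nonneg; lra]|].
  assert (hsum : forall m, 0 <= psum g m <= INR m * K).
  { induction m as [|m IH]; simpl psum; [simpl; lra|].
    destruct (hg (S m)); [lia|]. rewrite S_INR. lra. }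
  assert (hn : 1 <= INR (S n)) by (rewrite S_INR; pose proof (pos_INR n); lra).
  pose proof (psum_bseq_ge A (S n) hA) as hB. pose proof (hsum (S n)).
  assert (hB0 : 0 < psum (bseq A) (S n)) by nra.
  split; [apply div_nonneg; lra|].
  apply Rle_trans with (INR (S n) * K / (INR (S n) * ln 2)).
  - unfold Rdiv. apply Rmult_le_compat; [lra | left; apply Rinv_0_lt_compat; lra | lra |].
    apply Rinv_le_contravar; [nra | lra].
  - right. field. lra.
Qed.

Lemma psum_minus u v n : psum (fun k => u k - v k) n = psum u n - psum v n.
Proof. induction n as [|n IH]; simpl; [ring | rewrite IH; ring]. Qed.

Lemma dloc_sub_ratio r A g om n : (forall n, (1 <= n)%nat -> 2 <= A n) ->
  (forall n, 0 < cylmass r om n) ->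
  dloc r A om n - ratio g A n = dev (fun k b => surprisal r k b - g k) n om / psum (bseq A) n.
Proof.
  intros hA hpos. unfold dloc, ratio, dev.
  rewrite ln_cylmass, ln_diam, psum_minus by assumption.
  unfold Rdiv. rewrite Rinv_opp. ring.
Qed.

Lemma tends0_div_of_little_o (u v : nat -> R) (c : R) : 0 < c ->
  (forall n, INR n * c <= v n) -> little_o_n u -> tends0 (fun n => u n / v n).
Proof.
  intros hc hv hu eps heps. destruct (hu (eps * c / 2)) as [N hN].
  { apply Rmult_lt_0_compat; [nra | lra]. }
  exists (S N). intros n hn. specialize (hN n ltac:(lia)). pose proof (hv n).
  assert (hn1 : 1 <= INR n) by (apply (le_INR 1); lia).
  assert (hv0 : 0 < v n) by nra.
  unfold Rdiv. rewrite Rabs_mult, (Rabs_pos_eq (/ v n)) by (left; apply Rinv_0_lt_compat, hv0).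
  apply (Rmult_lt_reg_r (v n)); [exact hv0|].
  rewrite Rmult_assoc, Rinv_l, Rmult_1_r by lra. nra.
Qed.

Lemma ae_impl q (P Q : (nat -> bool) -> Prop) : (forall om, P om -> Q om) -> ae q P -> ae q Q.
Proof.
  intros hPQ hP eps heps. destruct (hP eps heps) as [ws [ns [hcov hsum]]].
  exists ws, ns. split; [|exact hsum]. intros om hQ. apply hcov. intros hp. apply hQ, hPQ, hp.
Qed.

Lemma pow4_sub_le u m : (u - m) ^ 4 <= 8 * u ^ 4 + 8 * m ^ 4.
Proof.
  assert (h1 : (u - m) ^ 2 <= 2 * u ^ 2 + 2 * m ^ 2) by (pose proof (pow2_ge_0 (u + m)); nra).
  assert (h2 : (u - m) ^ 4 <= (2 * u ^ 2 + 2 * m ^ 2) ^ 2).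
  { replace ((u - m) ^ 4) with (((u - m) ^ 2) ^ 2) by ring. apply pow_incr. split; [apply pow2_ge_0 | exact h1]. }
  assert (2 * u ^ 2 * m ^ 2 <= u ^ 4 + m ^ 4) by (pose proof (pow2_ge_0 (u ^ 2 - m ^ 2)); nra).
  nra.
Qed.

(* Digits are drawn with weights q, local dimensions are taken for the weights r,
   and g k is the q-mean of the k-th r-surprisal. *)
Lemma ae_dloc_same_lim_ratio A q r g K M :
  (forall n, (1 <= n)%nat -> 2 <= A n) -> is_prob_seq q ->
  (forall k, (1 <= k)%nat -> 0 <= g k <= K) ->
  (forall k, (1 <= k)%nat -> q k * surprisal r k false + (1 - q k) * surprisal r k true = g k) ->
  (forall k, (1 <= k)%nat ->
     q k * surprisal r k false ^ 4 + (1 - q k) * surprisal r k true ^ 4 <= M) ->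
  ae q (fun om => (forall n, 0 < cylmass r om n) ->
     same_liminf (dloc r A om) (ratio g A) /\ same_limsup (dloc r A om) (ratio g A)).
Proof.
  intros hA hq hg hmean hM.
  set (Y := fun k b => surprisal r k b - g k).
  assert (hc : centered q Y).
  { intros k hk. unfold Y. rewrite <- (hmean k hk). ring. }
  assert (hY4 : fourth_moment_le q Y (8 * M + 8 * K ^ 4)).
  { intros k hk. destruct (hq k hk). destruct (hg k hk).
    pose proof (hM k hk). unfold Y.
    pose proof (pow4_sub_le (surprisal r k false) (g k)).
    pose proof (pow4_sub_le (surprisal r k true) (g k)).
    assert (g k ^ 4 <= K ^ 4) by (apply pow_incr; lra).
    nra. }
  assert (hM0 : 0 <= 8 * M + 8 * K ^ 4).
  { destruct (hq 1%nat) as [h0 h1]; [lia|]. pose proof (hM 1%nat (le_n _)) as hM1.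
    assert (hK4 : 0 <= K ^ 4) by (apply pow_le; destruct (hg 1%nat); [lia | lra]).
    assert (hpow4 : forall y, 0 <= y ^ 4)
      by (intros y; replace (y ^ 4) with ((y ^ 2) ^ 2) by ring; apply pow2_ge_0).
    pose proof (hpow4 (surprisal r 1 false)). pose proof (hpow4 (surprisal r 1 true)). nra. }
  apply (ae_impl q (fun om => little_o_n (fun n => dev Y n om))).
  2: exact (ae_little_o_dev q Y _ hq hc hY4 hM0).
  intros om ho hpos.
  apply (same_liminf_limsup_of_close _ _ 0 (K / ln 2) (ratio_bounds g A K hA hg)).
  pose proof (tends0_div_of_little_o _ _ (ln 2) ln2_pos (fun n => psum_bseq_ge A n hA) ho) as ht.
  intros eps heps. destruct (ht eps heps) as [N hN]. exists N. intros n hn.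
  rewrite dloc_sub_ratio by assumption. exact (hN n hn).
Qed.

Lemma neg_ln_bounds c t : 0 < c <= t -> t <= 1 -> 0 <= - ln t <= - ln c.
Proof.
  intros [hc hct] ht. split.
  - destruct (Req_dec t 1) as [-> | h]; [rewrite ln_1; lra|].
    pose proof (ln_increasing t 1 ltac:(lra) ltac:(lra)). rewrite ln_1 in *. lra.
  - destruct (Req_dec c t) as [-> | h]; [lra|].
    pose proof (ln_increasing c t hc ltac:(lra)). lra.
Qed.

Lemma xlnx_eq t : xlnx t = t * ln t.
Proof. unfold xlnx. destruct (Req_EM_T t 0) as [-> | _]; [ring | reflexivity]. Qed.

(* Both bounds come from 1 + y <= exp y at y = - ln t, resp. y = - ln t / 4. *)
Lemma neg_xlnx_bounds t : 0 <= t <= 1 -> 0 <= - xlnx t <= 1.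
Proof.
  intros [h0 h1]. rewrite xlnx_eq. destruct (Req_dec t 0) as [-> | ht]; [lra|].
  pose proof (neg_ln_bounds t t ltac:(lra) h1) as [hl _].
  pose proof (exp_ineq1_le (- ln t)) as he. rewrite exp_Ropp, exp_ln in he by lra.
  apply (Rmult_le_compat_l t) in he; [|lra]. rewrite Rinv_r in he by lra. nra.
Qed.

Lemma mul_ln_pow4_le t : 0 <= t <= 1 -> t * ln t ^ 4 <= 256.
Proof.
  intros [h0 h1]. destruct (Req_dec t 0) as [-> | ht]; [lra|].
  pose proof (neg_ln_bounds t t ltac:(lra) h1) as [hl _].
  set (z := - ln t / 4).
  assert (hz : z <= exp z) by (pose proof (exp_ineq1_le z); lra).
  assert (hz4 : z ^ 4 <= exp z ^ 4) by (apply pow_incr; split; [unfold z; lra | exact hz]).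
  assert (he : exp z ^ 4 = / t).
  { simpl. rewrite Rmult_1_r, <- !exp_plus.
    replace (z + (z + (z + z))) with (- ln t) by (unfold z; field).
    rewrite exp_Ropp, exp_ln by lra. reflexivity. }
  rewrite he in hz4. apply (Rmult_le_compat_l t) in hz4; [|lra]. rewrite Rinv_r in hz4 by lra.
  replace (ln t ^ 4) with (256 * z ^ 4) by (unfold z; field). nra.
Qed.

Lemma cylmass_pos r om n : (forall k, (1 <= k)%nat -> 0 < r k < 1) -> 0 < cylmass r om n.
Proof.
  intros hr; induction n as [|n IH]; simpl; [lra|]. destruct (hr (S n)); [lia|].
  apply Rmult_lt_0_compat; [exact IH|]. destruct (om (S n)); lra.
Qed.

Lemma surprisal_bounds p a b k bb : 0 < a -> b < 1 -> a <= p k <= b ->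
  0 <= surprisal p k bb <= - ln a - ln (1 - b).
Proof.
  intros ha hb hp.
  pose proof (neg_ln_bounds a (p k) ltac:(lra) ltac:(lra)).
  pose proof (neg_ln_bounds (1 - b) (1 - p k) ltac:(lra) ltac:(lra)).
  unfold surprisal. destruct bb; lra.
Qed.

Lemma yseq_bounds p' k : 0 <= p' k <= 1 -> 0 <= yseq p' k <= 2.
Proof.
  intros hp. unfold yseq.
  pose proof (neg_xlnx_bounds (p' k) hp). pose proof (neg_xlnx_bounds (1 - p' k) ltac:(lra)). lra.
Qed.

Lemma self_surprisal_pow4_le q k : 0 <= q k <= 1 ->
  q k * surprisal q k false ^ 4 + (1 - q k) * surprisal q k true ^ 4 <= 512.
Proof.
  intros hq. unfold surprisal.
  replace ((- ln (q k)) ^ 4) with (ln (q k) ^ 4) by ring.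
  replace ((- ln (1 - q k)) ^ 4) with (ln (1 - q k) ^ 4) by ring.
  pose proof (mul_ln_pow4_le (q k) hq). pose proof (mul_ln_pow4_le (1 - q k) ltac:(lra)). lra.
Qed.

Theorem lemma3p2 (A p p' : nat -> R) (a b : R)
  (hA : forall n, (1 <= n)%nat -> 2 <= A n)
  (ha : 0 < a) (hab : a <= b) (hb : b < 1)
  (hp : forall n, (1 <= n)%nat -> a <= p n <= b)
  (hp' : forall n, (1 <= n)%nat -> 0 <= p' n <= 1) :
  ae p' (fun om =>
     same_liminf (dloc p A om) (ratio (xseq p p') A) /\
     same_limsup (dloc p A om) (ratio (xseq p p') A)) /\
  ae p' (fun om =>
     (forall n, 0 < cylmass p' om n) ->
     same_liminf (dloc p' A om) (ratio (yseq p') A) /\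
     same_limsup (dloc p' A om) (ratio (yseq p') A)).
Proof.
  split.
  - set (K := - ln a - ln (1 - b)).
    assert (hs : forall k bb, (1 <= k)%nat -> 0 <= surprisal p k bb <= K)
      by (intros k bb hk; apply surprisal_bounds; auto).
    eapply ae_impl; [|apply (ae_dloc_same_lim_ratio A p' p (xseq p p') K (K ^ 4) hA hp')].
    + intros om h. apply h. intros n. apply cylmass_pos. intros k hk. destruct (hp k hk). lra.
    + intros k hk. destruct (hp' k hk). pose proof (hs k false hk). pose proof (hs k true hk).
      unfold surprisal, xseq in *. split; nra.
    + intros k hk. unfold surprisal, xseq. ring.
    + intros k hk. destruct (hp' k hk).
      pose proof (pow_incr _ _ 4 (hs k false hk)). pose proof (pow_incr _ _ 4 (hs k true hk)). nra.
  - apply (ae_dloc_same_lim_ratio A p' p' (yseq p') 2 512 hA hp').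
    + intros k hk. apply yseq_bounds, hp', hk.
    + intros k hk. unfold surprisal, yseq. rewrite !xlnx_eq. ring.
    + intros k hk. apply self_surprisal_pow4_le, hp', hk.
Qed.
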